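(* Let $\mathcal G=(V,E)$ be a constraint graph over $(\mathbb F,S)$ and let $W$ be a weight on $\mathcal G$ with finite support (i.e. only finitely many vertices and edges have nonzero weight; e.g. $\mathcal G$ finite). If $W(v_1)>0$ for some $v_1\in V$, then there exists a periodic treequence $x\in X_{\mathcal G}$ with $x(\mathrm{id})=v_1$.
   Context: $\mathbb F$ is a finitely generated free group with symmetric free generating set $S=B\cup B^{-1}$, $B$ a free basis. A constraint graph is $\mathcal G=(V,E)$ with $E\subset V\times V\times S$, $(v,w;s)$ denoting the directed edge from $v$ to $w$ labeled $s$. The graph subshift $X_{\mathcal G}\subset V^{\mathbb F}$ is the set of $x:\mathbb F\to V$ with $(x(f),x(fs);s)\in E$ for all $f,s$; shifts act by $(\sigma_gx)(f)=x(g^{-1}f)$, and $x$ is periodic if $\{f:\sigma_fx=x\}$ has finite index in $\mathbb F$. A weight on $\mathcal G$ is $W:V\cup E\to[0,\infty)$ (with $W(v,w;s)=0$ for $(v,w;s)\notin E$) such that for all $v\in V,s\in S$: $W(v)=\sum_{w}W(v,w;s)=\sum_wW(w,v;s)$, and $W(v,w;s)=W(w,v;s^{-1})$ for all $v,w,s$. *)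

From Stdlib Require Import Reals.
From mathcomp Require Import all_boot.
From Stdlib Require List.

Set Implicit Arguments.
Unset Strict Implicit.
Unset Printing Implicit Defensive.

Section FreeGroup.
Variable B : finType.

(* The symmetric generating set S = B ∪ B^{-1}: (b,false) = b, (b,true) = b^{-1}. *)
Definition letter : Type := (B * bool)%type.
Definition linv (s : letter) : letter := (s.1, ~~ s.2).

Fixpoint reducedb (w : seq letter) : bool :=
  match w with
  | s :: ((t :: _) as w') => (t != linv s) && reducedb w'
  | _ => true
  end.

Definition cons_red (s : letter) (w : seq letter) : seq letter :=
  match w with
  | t :: w' => if t == linv s then w' else s :: t :: w'
  | [::] => [:: s]
  end.
Definition red (w : seq letter) : seq letter := foldr cons_red [::] w.

Lemma reducedb_tail s w : reducedb (s :: w) -> reducedb w.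
Proof. by case: w => [|t w] //= /andP[]. Qed.

Lemma cons_red_reduced s w : reducedb w -> reducedb (cons_red s w).
Proof.
case: w => [|t w] //= Hw.
case: ifP => [_|Hne]; first exact: reducedb_tail Hw.
by rewrite /= Hne.
Qed.

Lemma red_reduced w : reducedb (red w).
Proof. by elim: w => [|s w IH] //=; apply: cons_red_reduced. Qed.

Definition FG : Type := {w : seq letter | reducedb w}.

Definition FG1 : FG := exist _ [::] isT.
Definition FGmul (u v : FG) : FG :=
  exist _ (red (proj1_sig u ++ proj1_sig v)) (red_reduced _).
Definition FGinv (u : FG) : FG :=
  exist _ (red (rev (map linv (proj1_sig u)))) (red_reduced _).
Definition FGgen (s : letter) : FG := exist _ [:: s] isT.

End FreeGroup.

Section Subshift.
Variable B : finType.
Variable V : Type.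

Definition graph_subshift (E : V -> V -> letter B -> Prop) (x : FG B -> V) : Prop :=
  forall (f : FG B) (s : letter B), E (x f) (x (FGmul f (FGgen s))) s.

Definition shift (g : FG B) (x : FG B -> V) : FG B -> V :=
  fun f => x (FGmul (FGinv g) f).

(* x is periodic: its stabilizer {f | σ_f x = x} has finite index in F,
   i.e. finitely many left cosets r·Stab cover F. *)
Definition periodic (x : FG B -> V) : Prop :=
  exists reps : seq (FG B),
    forall f : FG B, exists2 r, List.In r reps &
      (forall h, shift (FGmul (FGinv r) f) x h = x h).

Definition sumR (L : list V) (g : V -> R) : R :=
  foldr (fun v acc => Rplus (g v) acc) R0 L.

(* W is a weight on G with finite support: W : V ∪ E -> [0,∞), zero off E,
   supported on a finite duplicate-free list L of vertices (all vertices and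
   endpoints of edges of nonzero weight lie in L), satisfying the
   conservation laws (sums over w ∈ V, which reduce to sums over L) and the
   symmetry W(v,w;s) = W(w,v;s^{-1}). *)
Definition finite_weight (E : V -> V -> letter B -> Prop)
    (Wv : V -> R) (We : V -> V -> letter B -> R) : Prop :=
  (forall v, Rle R0 (Wv v)) /\
  (forall v w s, Rle R0 (We v w s)) /\
  (forall v w s, ~ E v w s -> We v w s = R0) /\
  (forall v w s, We v w s = We w v (linv s)) /\
  exists L : list V,
    List.NoDup L /\
    (forall v, Wv v <> R0 -> List.In v L) /\
    (forall v w s, We v w s <> R0 -> List.In v L /\ List.In w L) /\
    (forall v s, Wv v = sumR L (fun w => We v w s)) /\
    (forall v s, Wv v = sumR L (fun w => We w v s)).

End Subshift.

(* The weight axioms (conservation at each vertex for each letter, and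
   symmetry W(v,w;s) = W(w,v;s^-1)) are a homogeneous system of integer linear
   equations in the finitely many values of W.  A system with a real solution
   also has an integer solution with the same sign pattern (Gaussian
   elimination for the equations, rounding a dilated solution for the strict
   inequalities), so we may assume that W takes values in nat.  Give vertex i
   exactly W(i) slots; for each letter t, cut the slots of row i into blocks
   of sizes W(i,j;t) and send the k-th slot of block j to the k-th slot of
   block i in row j.  By symmetry the map for t^-1 inverts the map for t, so
   these bijections define an action of the free group on the finite set of
   slots, every step of which follows an edge of G.  Reading the vertex
   labels along the orbit of a slot of v1 gives the required point; it is
   periodic because the stabilizer of a point of a finite set has finite index. *)
From Pilot Require Import Defs.
From Stdlib Require Import Reals Lra Lia ZArith Classical.
From mathcomp Require Import all_boot.
Set Implicit Arguments.
Unset Strict Implicit.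

Lemma In_memP (T : eqType) (x : T) (s : seq T) : x \in s <-> List.In x s.
Proof.
elim: s => [|y s IH] //=; rewrite in_cons.
split=> [/orP[/eqP ->|/IH]|[->|/IH ->]]; rewrite ?eqxx ?orbT //; by [left|right].
Qed.

Lemma In_nth (V : Type) (v0 v : V) (L : seq V) :
  List.In v L -> exists2 i, i < size L & nth v0 L i = v.
Proof.
elim: L => [|w L IH] //= [->|/IH [i Hi <-]]; first by exists 0.
by exists i.+1.
Qed.

Lemma In_iota j n : List.In j (iota 0 n) <-> j < n.
Proof. by rewrite -In_memP mem_iota. Qed.

Section RealSums.
Local Open Scope R_scope.

Definition sumL (A : Type) (s : seq A) (g : A -> R) : R :=
  foldr (fun a acc => g a + acc) 0 s.

Lemma sumL_add (A : Type) (s : seq A) g h :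
  sumL s (fun a => g a + h a) = sumL s g + sumL s h.
Proof. by elim: s => [|a s IH] /=; [ring | rewrite IH; ring]. Qed.

Lemma sumL_cat (A : Type) (s1 s2 : seq A) g :
  sumL (s1 ++ s2) g = sumL s1 g + sumL s2 g.
Proof. by elim: s1 => [|a s IH] /=; [ring | rewrite IH; ring]. Qed.

Lemma sumL_ext_in (A : Type) (s : seq A) g h :
  (forall a, List.In a s -> g a = h a) -> sumL s g = sumL s h.
Proof.
elim: s => [|a s IH] Hgh //=; rewrite Hgh; last by left.
by rewrite IH // => b hb; apply: Hgh; right.
Qed.

Lemma sumL_map (A C : Type) (h : A -> C) s g :
  sumL (map h s) g = sumL s (fun a => g (h a)).
Proof. by elim: s => [|a s IH] //=; rewrite IH. Qed.

End RealSums.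

Section LinearForms.
Local Open Scope R_scope.
Variable I : eqType.

(* A linear form with integer coefficients in the variables I, as a list of
   (coefficient, variable) pairs; [evalF f x] is its value at x : I -> R. *)
Definition form := seq (Z * I).
Definition evalF (f : form) (x : I -> R) : R :=
  foldr (fun p acc => IZR p.1 * x p.2 + acc) 0 f.
Definition evalZ (f : form) (x : I -> Z) : Z :=
  foldr (fun p acc => (p.1 * x p.2 + acc)%Z) 0%Z f.
Definition coefF (f : form) (j : I) : Z :=
  foldr (fun p acc => ((if p.2 == j then p.1 else 0) + acc)%Z) 0%Z f.
Definition scaleF (a : Z) (f : form) : form :=
  map (fun p => (a * p.1, p.2)%Z) f.
Definition absF (f : form) : R := foldr (fun p acc => Rabs (IZR p.1) + acc) 0 f.

Lemma evalZ_R f z : IZR (evalZ f z) = evalF f (fun l => IZR (z l)).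
Proof. by elim: f => [|[a l] f IH] //=; rewrite plus_IZR mult_IZR IH. Qed.

Lemma evalF_cat f g x : evalF (f ++ g) x = evalF f x + evalF g x.
Proof. by elim: f => [|[a l] f IH] /=; [ring | rewrite IH; ring]. Qed.

Lemma evalF_scale a f x : evalF (scaleF a f) x = IZR a * evalF f x.
Proof. by elim: f => [|[b l] f IH] /=; [ring | rewrite IH mult_IZR; ring]. Qed.

Lemma coefF_scale a f j : coefF (scaleF a f) j = (a * coefF f j)%Z.
Proof. by elim: f => [|[b l] f IH] /=; [lia | rewrite IH; case: (l == j); lia]. Qed.

Lemma evalF_shift f a c j y y' :
  (forall l, y' l = IZR a * y l - (if l == j then c else 0)) ->
  evalF f y' = IZR a * evalF f y - IZR (coefF f j) * c.
Proof.
move=> Hy; elim: f => [|[b l] f IH] /=; first ring.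
by rewrite IH Hy plus_IZR; case: (l == j) => /=; ring.
Qed.

Lemma coefF_notin f l : l \notin map snd f -> coefF f l = 0%Z.
Proof.
elim: f => [|[b k] f IH] //=; rewrite in_cons negb_or => /andP[H1 H2].
by rewrite IH // eq_sym (negbTE H1); lia.
Qed.

Lemma evalF_coef f x :
  evalF f x = sumL (undup (map snd f)) (fun j => IZR (coefF f j) * x j).
Proof.
have delta (u : seq I) l (c : R) : uniq u ->
    sumL u (fun j => if l == j then c else 0) = if l \in u then c else 0.
  elim: u => [|k u IH] //= /andP[ku uu]; rewrite IH // in_cons.
  case: eqP => [->|_] /=; last ring.
  by rewrite (negbTE ku); ring.
elim: f => [|[a l] f IH] //=.
have U := undup_uniq (map snd f).
rewrite (sumL_ext_in (h := fun j => (if l == j then IZR a * x l else 0)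
       + IZR (coefF f j) * x j)); last first.
  by move=> j _; rewrite plus_IZR; case: eqP => [->|_]; ring.
case: ifP => Hl.
  by rewrite sumL_add delta // mem_undup Hl IH; ring.
by rewrite /= sumL_add delta // mem_undup Hl IH eqxx coefF_notin ?Hl //; ring.
Qed.

Lemma evalF_zero f x : (forall j, coefF f j = 0%Z) -> evalF f x = 0.
Proof.
move=> H0; rewrite evalF_coef.
by elim: (undup _) => [|k u IH] //=; rewrite IH H0; ring.
Qed.

Lemma absF_bound f d : (forall l, 0 <= d l <= 1) -> - absF f <= evalF f d.
Proof.
move=> Hd; elim: f => [|[b l] f IH] /=; first lra.
have [H1 H2] := Hd l.
suff : - Rabs (IZR b) <= IZR b * d l by lra.
case: (Rle_or_lt 0 (IZR b)) => Hb; first by rewrite Rabs_right; nra.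
by rewrite Rabs_left //; nra.
Qed.

Lemma absF_ge0 f : 0 <= absF f.
Proof. by elim: f => [|[b l] f IH] /=; [lra | have := Rabs_pos (IZR b); lra]. Qed.

(* After a large enough dilation K x, every form positive at x exceeds its
   coefficient mass absF g, which absorbs any rounding error. *)
Lemma dilation_dominates (ineqs : seq form) (x : I -> R) :
  (forall g, List.In g ineqs -> 0 < evalF g x) ->
  exists K, 0 <= K /\ forall g, List.In g ineqs -> absF g < K * evalF g x.
Proof.
elim: ineqs => [|g gs IH] Hpos; first by exists 0; split => //; apply: Rle_refl.
have [K0 [HK0 HK]] := IH (fun g' h => Hpos g' (or_intror h)).
have Hg := Hpos g (or_introl erefl).
have Hq : 0 <= absF g / evalF g x by apply: Rle_mult_inv_pos; [apply: absF_ge0 | lra].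
have Hqg : absF g / evalF g x * evalF g x = absF g by field; lra.
exists (K0 + absF g / evalF g x + 1); split; first lra.
move=> g' [<-|Hin]; first nra.
by have := HK g' Hin; have := Hpos g' (or_intror Hin); nra.
Qed.

Lemma strict_integer_solution (ineqs : seq form) (x : I -> R) :
  (forall g, List.In g ineqs -> 0 < evalF g x) ->
  exists z : I -> Z, forall g, List.In g ineqs -> 0 < evalF g (fun l => IZR (z l)).
Proof.
move=> Hpos; have [K [HK HKg]] := dilation_dominates Hpos.
exists (fun l => up (K * x l)) => g Hg.
pose d l := IZR (up (K * x l)) - K * x l.
have Hd : forall l, 0 <= d l <= 1.
  by move=> l; rewrite /d; have [h1 h2] := archimed (K * x l); lra.
have -> : evalF g (fun l => IZR (up (K * x l))) = evalF g d + K * evalF g x.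
  elim: (g) => [|[b l] f IHf] /=; [ring | rewrite IHf /d; ring].
by have := absF_bound g Hd; have := HKg g Hg; lra.
Qed.

Definition solves (eqs ineqs : seq form) (y : I -> R) : Prop :=
  (forall e, List.In e eqs -> evalF e y = 0) /\
  (forall g, List.In g ineqs -> 0 < evalF g y).

Definition elim_form (e : form) (j : I) (f : form) : form :=
  scaleF (coefF e j) f ++ scaleF (- coefF f j) e.

Lemma evalF_elim e j f y :
  evalF (elim_form e j f) y = IZR (coefF e j) * evalF f y - IZR (coefF f j) * evalF e y.
Proof. by rewrite evalF_cat !evalF_scale opp_IZR; ring. Qed.

Lemma back_substitution e j (z' : I -> Z) :
  exists z : I -> Z, evalF e (fun l => IZR (z l)) = 0 /\
    forall f, evalF f (fun l => IZR (z l)) = evalF (elim_form e j f) (fun l => IZR (z' l)).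
Proof.
pose c := evalZ e z'.
have Hz f : evalF f (fun l => IZR (coefF e j * z' l - (if l == j then c else 0))%Z)
          = evalF (elim_form e j f) (fun l => IZR (z' l)).
  rewrite evalF_elim -(evalZ_R e z') -/c; apply: evalF_shift => l.
  by rewrite minus_IZR mult_IZR; case: (l == j).
exists (fun l => (coefF e j * z' l - (if l == j then c else 0))%Z); split => //.
by rewrite Hz evalF_elim; ring.
Qed.

Theorem integer_solution (eqs ineqs : seq form) (x : I -> R) :
  solves eqs ineqs x -> exists z : I -> Z, solves eqs ineqs (fun l => IZR (z l)).
Proof.
move Hn: (size eqs) => n; elim: n eqs ineqs Hn => [|n IH] [|e eqs] ineqs //=.
  by move=> _ [_ Hg]; have [z Hz] := strict_integer_solution Hg; exists z; split.
move=> [Hn] [He Hg].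
have He0 := He e (or_introl erefl).
have Heqs : forall e', List.In e' eqs -> evalF e' x = 0 by move=> e' h; apply: He; right.
case: (classic (exists j, coefF e j <> 0%Z)) => [[j Hj]|Hnone]; last first.
  have [z [Hz1 Hz2]] := IH eqs ineqs Hn (conj Heqs Hg).
  exists z; split => // e1 [<-|h]; last exact: Hz1.
  by apply: evalF_zero => j; apply: NNPP => h; apply: Hnone; exists j.
pose e' := scaleF (Z.sgn (coefF e j)) e.
have Ha : (0 < coefF e' j)%Z by rewrite coefF_scale; lia.
have He' y : evalF e' y = 0 -> evalF e y = 0.
  rewrite evalF_scale => /Rmult_integral [|//] /eq_IZR; lia.
have Hx' : evalF e' x = 0 by rewrite evalF_scale He0; ring.
have [z' [Hz1 Hz2]] : exists z' : I -> Z,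
    solves (map (elim_form e' j) eqs) (map (elim_form e' j) ineqs) (fun l => IZR (z' l)).
  apply: IH; first by rewrite size_map.
  split => g /List.in_map_iff [f [<- Hf]]; rewrite evalF_elim Hx'.
    by rewrite (Heqs f Hf); ring.
  by have := IZR_lt _ _ Ha; have := Hg f Hf; nra.
have [z [Hze Hzf]] := back_substitution e' j z'.
exists z; split; last by move=> g Hin; rewrite Hzf; apply: Hz2; apply: List.in_map.
by move=> e1 [<-|Hin]; [apply: He' | rewrite Hzf; apply: Hz1; apply: List.in_map].
Qed.

Corollary integer_solution_support (eqs : seq form) (x : I -> R) (vars : seq I) :
  (forall l, 0 <= x l) -> (forall e, List.In e eqs -> evalF e x = 0) ->
  exists z : I -> Z, (forall e, List.In e eqs -> evalF e (fun l => IZR (z l)) = 0) /\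
    forall l, List.In l vars -> (0 <= z l)%Z /\ ((0 < z l)%Z <-> 0 < x l).
Proof.
move=> Hx Heqs.
pose pos l := if Rlt_dec 0 (x l) then true else false.
pose unit l : form := [:: (1%Z, l)].
have Hunit l y : evalF (unit l) y = y l by rewrite /= Rmult_1_l Rplus_0_r.
pose zeros := List.map unit (List.filter (fun l => ~~ pos l) vars).
pose positives := List.map unit (List.filter pos vars).
have [z [Hz1 Hz2]] : exists z : I -> Z,
    solves (eqs ++ zeros) positives (fun l => IZR (z l)).
  apply: (@integer_solution _ _ x); split.
    move=> e /List.in_app_iff [/Heqs //|/List.in_map_iff [l [<- /List.filter_In [_]]]].
    by rewrite Hunit /pos; case: Rlt_dec => // /Rnot_lt_le h _; have := Hx l; lra.
  move=> g /List.in_map_iff [l [<- /List.filter_In [_]]].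
  by rewrite Hunit /pos; case: Rlt_dec.
exists z; split=> [e He|l Hl]; first by apply: Hz1; apply/List.in_app_iff; left.
case: (Rlt_dec 0 (x l)) => Hxl.
  have Hin : List.In (unit l) positives.
    by apply/List.in_map/List.filter_In; rewrite /pos; case: Rlt_dec.
  have := Hz2 _ Hin; rewrite Hunit => /lt_IZR Hzl.
  by split; [lia | split].
have Hin : List.In (unit l) (eqs ++ zeros).
  apply/List.in_or_app; right.
  by apply/List.in_map/List.filter_In; rewrite /pos; case: Rlt_dec.
have := Hz1 _ Hin; rewrite Hunit => /eq_IZR ->.
by split; [lia | split => // /Hxl].
Qed.
End LinearForms.

Fixpoint psum (g : nat -> nat) (j : nat) : nat :=
  if j is j'.+1 then psum g j' + g j' else 0.

Lemma psum_mono g j1 j2 : j1 <= j2 -> psum g j1 <= psum g j2.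
Proof.
move=> /subnKC <-; elim: (j2 - j1) => [|d IH]; first by rewrite addn0.
by rewrite addnS /=; apply: leq_trans IH (leq_addr _ _).
Qed.

Lemma psum_ext g h j : (forall j', j' < j -> g j' = h j') -> psum g j = psum h j.
Proof. by elim: j => [|j IH] Hgh //=; rewrite IH ?Hgh // => j' /ltnW; apply: Hgh. Qed.

Lemma sumL_psum (g : nat -> nat) n :
  sumL (iota 0 n) (fun j => INR (g j)) = INR (psum g n).
Proof.
elim: n => [|n IH] //.
by rewrite -addn1 iotaD sumL_cat IH /= add0n addn1 /= plus_INR Rplus_0_r.
Qed.

Definition block_index (g : nat -> nat) (m k : nat) : nat :=
  find (fun j => k < psum g j.+1) (iota 0 m).

Lemma block_index_spec g m k j :
  j < m -> psum g j <= k < psum g j.+1 -> block_index g m k = j.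
Proof.
move=> jm /andP[h1 h2]; rewrite /block_index.
set q := (fun j => k < psum g j.+1).
have hq : has q (iota 0 m) by apply/hasP; exists j; rewrite ?mem_iota.
have fs : find q (iota 0 m) < m by move: hq; rewrite has_find size_iota.
have := nth_find 0 hq; rewrite nth_iota // add0n => hf.
case: (ltngtP (find q (iota 0 m)) j) => // c.
  have := leq_trans (leq_ltn_trans h1 hf) (psum_mono g c).
  by rewrite ltnn.
by have := before_find 0 c; rewrite nth_iota // add0n /q h2.
Qed.

Lemma block_exists g m k :
  k < psum g m -> exists j, j < m /\ psum g j <= k < psum g j.+1.
Proof.
elim: m => [|m IH] //= h.
case: (ltnP k (psum g m)) => h'.
  by have [j [j1 j2]] := IH h'; exists j; split => //; exact: ltnW.
by exists m; rewrite ltnSn h' h.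
Qed.

(* For a matrix M of block sizes and its transpose M', slot k of row i (cut
   into blocks M i j) goes to the same offset of block i in row j (cut into
   blocks M' j i = M i j): a bijection between the slots of rows and columns. *)
Definition block_transfer (m : nat) (M M' : nat -> nat -> nat) (w : nat * nat) :=
  let j := block_index (M w.1) m w.2 in
  (j, psum (M' j) w.1 + (w.2 - psum (M w.1) j)).

Lemma block_transfer_spec m M M' i k :
  (forall i j, i < m -> j < m -> M' j i = M i j) ->
  i < m -> k < psum (M i) m ->
  let w := block_transfer m M M' (i, k) in
  [/\ w.1 < m, w.2 < psum (M' w.1) m, 0 < M i w.1
    & block_transfer m M' M w = (i, k)].
Proof.
move=> HT im km; rewrite /block_transfer /=.
have [j [jm /andP[h1 h2]]] := block_exists km.
have -> : block_index (M i) m k = j by apply: block_index_spec; rewrite ?h1.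
have He : k - psum (M i) j < M i j by rewrite ltn_subLR.
have Hk' : psum (M' j) i + (k - psum (M i) j) < psum (M' j) i.+1.
  by rewrite /= ltn_add2l HT.
split => //=; first by apply: leq_trans Hk' _; apply: psum_mono.
  by apply: leq_ltn_trans He.
have -> : block_index (M' j) m (psum (M' j) i + (k - psum (M i) j)) = i.
  by apply: block_index_spec; rewrite ?leq_addr.
by rewrite addKn subnKC.
Qed.

Lemma linvK (B : finType) (s : letter B) : linv (linv s) = s.
Proof. by case: s => b c; rewrite /linv /= negbK. Qed.

Lemma choose_witnesses (T U : Type) (l : seq T) (P : T -> U -> Prop) :
  exists reps : seq U, forall w, List.In w l -> (exists r, P w r) ->
    exists2 r, List.In r reps & P w r.
Proof.
elim: l => [|w l [reps IH]]; first by exists [::].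
case: (classic (exists r, P w r)) => [[r0 H0]|Hn].
  exists (r0 :: reps) => w' [<-|h] hex; first by exists r0; [left|].
  by have [r hr hp] := IH w' h hex; exists r; [right|].
by exists reps => w' [<-|h] hex; [exfalso | exact: IH].
Qed.

Section FreeGroupAction.
Variables (B : finType) (T : Type) (D : T -> Prop) (pi : letter B -> T -> T).
Hypothesis Dpi : forall s w, D w -> D (pi s w).
Hypothesis pi_linv : forall s w, D w -> pi (linv s) (pi s w) = w.

Definition act (w : T) (u : seq (letter B)) : T := foldl (fun w s => pi s w) w u.

Lemma act_D w u : D w -> D (act w u).
Proof. by elim: u w => [|s u IH] w Hw //=; apply: IH; apply: Dpi. Qed.

Lemma act_cat w u v : act w (u ++ v) = act (act w u) v.
Proof. by rewrite /act foldl_cat. Qed.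

Lemma act_red w u : D w -> act w (red u) = act w u.
Proof.
elim: u w => [|s u IH] w Hw //=.
rewrite -IH; last exact: Dpi.
case: (red u) => [|t u'] //=.
by case: eqP => [->|_] //=; rewrite pi_linv.
Qed.

Lemma act_inv w u : D w -> act (act w u) (rev (map (@linv B) u)) = w.
Proof.
elim: u w => [|s u IH] w Hw //=.
by rewrite rev_cons -cats1 act_cat IH /= ?pi_linv //; apply: Dpi.
Qed.

Lemma act_inv' w u : D w -> act (act w (rev (map (@linv B) u))) u = w.
Proof.
move=> Hw; have := act_inv (rev (map (@linv B) u)) Hw.
by rewrite map_rev revK -map_comp (eq_map (@linvK B)) map_id.
Qed.

Definition actF (w : T) (u : FG B) : T := act w (proj1_sig u).

Lemma actF_D w u : D w -> D (actF w u).
Proof. exact: act_D. Qed.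

Lemma actF_mul w u v : D w -> actF w (FGmul u v) = actF (actF w u) v.
Proof. by move=> Hw; rewrite /actF /FGmul /= act_red // act_cat. Qed.

Lemma actF_inv w u : D w -> actF (actF w (FGinv u)) u = w.
Proof. by move=> Hw; rewrite /actF /FGinv /= act_red ?act_inv'. Qed.

Lemma actF_inv' w u : D w -> actF (actF w u) (FGinv u) = w.
Proof. by move=> Hw; rewrite /actF /FGinv /= act_red ?act_inv //; apply: act_D. Qed.

Lemma orbit_subshift (V : Type) (E : V -> V -> letter B -> Prop) (lab : T -> V) w0 :
  D w0 -> (forall s w, D w -> E (lab w) (lab (pi s w)) s) ->
  graph_subshift E (fun f => lab (actF w0 f)).
Proof.
by move=> Hw0 HE f s; rewrite actF_mul //; apply: HE; apply: actF_D.
Qed.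

Lemma orbit_periodic (V : Type) (lab : T -> V) w0 (elems : seq T) :
  D w0 -> (forall w, D w -> List.In w elems) ->
  periodic (fun f => lab (actF w0 f)).
Proof.
move=> Hw0 Helems.
have [reps Hreps] := choose_witnesses elems (fun w r => actF w0 (FGinv r) = w).
exists reps => f.
have [r Hr Hrf] : exists2 r, List.In r reps & actF w0 (FGinv r) = actF w0 (FGinv f).
  by apply: Hreps; [apply: Helems; apply: actF_D | exists f].
exists r => // h.
set g := FGmul (FGinv r) f.
have Hg : actF w0 (FGinv g) = w0.
  have Hg : actF w0 g = w0 by rewrite /g actF_mul // Hrf actF_inv.
  by have := actF_inv' g Hw0; rewrite Hg.
by rewrite /Defs.shift actF_mul // Hg.
Qed.
End FreeGroupAction.

(* Weights on the vertices 0..m-1 as vectors indexed by vertices (inl i) and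
   labelled edges (inr (i, j, t)); the weight axioms become linear equations. *)
Section WeightSystem.
Local Open Scope R_scope.
Variables (B : finType) (m : nat).

Definition windex : Type := (nat + (nat * nat * letter B))%type.

Definition letters : seq (letter B) := enum (@predT (B * bool)%type).

Lemma In_letters t : List.In t letters.
Proof. by apply/In_memP; rewrite mem_enum. Qed.

Definition balanced (y : windex -> R) : Prop :=
  [/\ forall i t, (i < m)%N -> y (inl i) = sumL (iota 0 m) (fun j => y (inr (i, j, t))),
      forall i t, (i < m)%N -> y (inl i) = sumL (iota 0 m) (fun j => y (inr (j, i, t)))
    & forall t i j, (i < m)%N -> (j < m)%N -> y (inr (j, i, linv t)) = y (inr (i, j, t))].

Definition conservation_form (l : windex) (h : nat -> windex) : form windex :=
  (1%Z, l) :: map (fun j => ((-1)%Z, h j)) (iota 0 m).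
Definition symmetry_form (i j : nat) (t : letter B) : form windex :=
  [:: (1%Z, inr (i, j, t)); ((-1)%Z, inr (j, i, linv t))].

Lemma evalF_conservation l h y :
  evalF (conservation_form l h) y = y l - sumL (iota 0 m) (fun j => y (h j)).
Proof.
rewrite /= Rmult_1_l; congr Rplus.
by elim: (iota 0 m) => [|a s IH] /=; [ring | rewrite IH; ring].
Qed.

Lemma evalF_symmetry i j t y :
  evalF (symmetry_form i j t) y = y (inr (i, j, t)) - y (inr (j, i, linv t)).
Proof. by rewrite /=; ring. Qed.

Definition weight_forms : seq (form windex) :=
  List.flat_map (fun i => List.flat_map (fun t =>
      conservation_form (inl i) (fun j => inr (i, j, t))
   :: conservation_form (inl i) (fun j => inr (j, i, t))
   :: List.map (fun j => symmetry_form i j t) (iota 0 m)) letters) (iota 0 m).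

Lemma balanced_forms y :
  balanced y <-> forall e, List.In e weight_forms -> evalF e y = 0.
Proof.
split=> [[Hrow Hcol Hsym] e|He].
  move=> /List.in_flat_map [i [/In_iota Hi /List.in_flat_map [t [_ Het]]]].
  case: Het => [<-|[<-|/List.in_map_iff [j [<- /In_iota Hj]]]].
  - by rewrite evalF_conservation; apply: Rminus_diag_eq; apply: Hrow.
  - by rewrite evalF_conservation; apply: Rminus_diag_eq; apply: Hcol.
  - by rewrite evalF_symmetry; apply: Rminus_diag_eq; rewrite Hsym.
have Hin i t e : (i < m)%N -> (e = conservation_form (inl i) (fun j => inr (i, j, t))
    \/ e = conservation_form (inl i) (fun j => inr (j, i, t))
    \/ List.In e (List.map (fun j => symmetry_form i j t) (iota 0 m))) ->
    evalF e y = 0.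
  move=> Hi Het; apply: He; apply/List.in_flat_map; exists i; split; first exact/In_iota.
  apply/List.in_flat_map; exists t; split; first exact: In_letters.
  by case: Het => [->|[->|]]; [left | right; left | right; right].
split=> [i t Hi|i t Hi|t i j Hi Hj].
- by apply: Rminus_diag_uniq; rewrite -evalF_conservation; apply: (Hin i t) => //; left.
- by apply: Rminus_diag_uniq; rewrite -evalF_conservation; apply: (Hin i t) => //; right; left.
- apply: Rminus_diag_uniq_sym; rewrite -evalF_symmetry; apply: (Hin i t) => //.
  by right; right; apply: List.in_map; apply/In_iota.
Qed.

Definition weight_vars : seq windex :=
  List.map inl (iota 0 m) ++
  List.flat_map (fun i => List.flat_map (fun j =>
    List.map (fun t => inr (i, j, t)) letters) (iota 0 m)) (iota 0 m).

Lemma weight_vars_inl i : (i < m)%N -> List.In (inl i) weight_vars.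
Proof. by move=> Hi; apply/List.in_or_app; left; apply/List.in_map/In_iota. Qed.

Lemma weight_vars_inr i j t :
  (i < m)%N -> (j < m)%N -> List.In (inr (i, j, t)) weight_vars.
Proof.
move=> Hi Hj; apply/List.in_or_app; right.
apply/List.in_flat_map; exists i; split; first exact/In_iota.
apply/List.in_flat_map; exists j; split; first exact/In_iota.
exact/List.in_map/In_letters.
Qed.

Definition nat_weight (n : nat -> nat) (N : letter B -> nat -> nat -> nat) : Prop :=
  [/\ forall i t, (i < m)%N -> n i = psum (N t i) m,
      forall i t, (i < m)%N -> n i = psum (fun j => N t j i) m
    & forall t i j, (i < m)%N -> (j < m)%N -> N (linv t) j i = N t i j].

Lemma nat_weight_same_support (y : windex -> R) :
  (forall l, 0 <= y l) -> balanced y ->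
  exists n N, [/\ nat_weight n N,
    forall i, (i < m)%N -> (0 < n i)%N <-> 0 < y (inl i)
  & forall t i j, (i < m)%N -> (j < m)%N -> (0 < N t i j)%N <-> 0 < y (inr (i, j, t))].
Proof.
move=> Hy /balanced_forms Hb.
have [z [/balanced_forms [Hrow Hcol Hsym] Hsupp]] :=
  integer_solution_support weight_vars Hy Hb.
have toINR l : List.In l weight_vars -> INR (Z.to_nat (z l)) = IZR (z l).
  by move=> /Hsupp [Hz _]; rewrite INR_IZR_INZ Z2Nat.id.
have pos l : List.In l weight_vars -> (0 < Z.to_nat (z l))%N <-> 0 < y l.
  by move=> /Hsupp [Hz <-]; split => [/ltP|?]; [|apply/ltP]; lia.
have sums h : (forall j, (j < m)%N -> List.In (h j) weight_vars) ->
    sumL (iota 0 m) (fun j => IZR (z (h j))) = INR (psum (fun j => Z.to_nat (z (h j))) m).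
  move=> Hh; rewrite -sumL_psum; apply: sumL_ext_in => j /In_iota Hj.
  by rewrite (toINR _ (Hh j Hj)).
exists (fun i => Z.to_nat (z (inl i))), (fun t i j => Z.to_nat (z (inr (i, j, t)))).
split=> [|i Hi|t i j Hi Hj]; last 2 first.
- by apply: pos; apply: weight_vars_inl.
- by apply: pos; apply: weight_vars_inr.
split=> [i t Hi|i t Hi|t i j Hi Hj]; try apply: INR_eq.
- rewrite (toINR _ (weight_vars_inl Hi)).
  by apply: eq_trans (Hrow i t Hi) (sums _ _) => j Hj; apply: weight_vars_inr.
- rewrite (toINR _ (weight_vars_inl Hi)).
  by apply: eq_trans (Hcol i t Hi) (sums _ _) => j Hj; apply: weight_vars_inr.
- by move: (Hsym t i j Hi Hj) => /= /eq_IZR ->.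
Qed.
End WeightSystem.

(* Given a nat weight, the slots of vertex i are the pairs (i, k) with k < n i;
   the letter t moves slot (i, k) in block j of row i to block i of row j. *)
Section SlotPairing.
Variables (B : finType) (m : nat) (n : nat -> nat) (N : letter B -> nat -> nat -> nat).
Hypothesis HN : nat_weight m n N.

Definition slot (w : nat * nat) : Prop := w.1 < m /\ w.2 < n w.1.

Definition slot_move (t : letter B) : nat * nat -> nat * nat :=
  block_transfer m (N t) (N (linv t)).

Lemma slot_move_spec t w : slot w ->
  [/\ slot (slot_move t w), 0 < N t w.1 (slot_move t w).1
    & slot_move (linv t) (slot_move t w) = w].
Proof.
case: w => i k [/= Hi Hk]; case: HN => Hrow Hcol Hsym.
rewrite (Hrow i t Hi) in Hk.
have [Hj Hk' Hpos Hback] := block_transfer_spec (Hsym t) Hi Hk.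
split=> //; last by rewrite /slot_move linvK.
split=> //; rewrite (Hcol _ t Hj); congr (_ < _): Hk'.
by apply: psum_ext => i' Hi'; rewrite Hsym.
Qed.

Definition slots : seq (nat * nat) :=
  List.flat_map (fun i => List.map (pair i) (iota 0 (n i))) (iota 0 m).

Lemma slots_complete w : slot w -> List.In w slots.
Proof.
case: w => i k [/= Hi Hk]; apply/List.in_flat_map; exists i.
by split; [apply/In_iota | apply/List.in_map/In_iota].
Qed.
End SlotPairing.

Definition weight_vector (B : finType) (V : Type) (Wv : V -> R)
    (We : V -> V -> letter B -> R) (vtx : nat -> V) : windex B -> R :=
  fun l => match l with inl i => Wv (vtx i) | inr (i, j, t) => We (vtx i) (vtx j) t end.

Lemma sumR_nth (V : Type) (v0 : V) (L : seq V) (g : V -> R) :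
  sumR L g = sumL (iota 0 (size L)) (fun i => g (nth v0 L i)).
Proof. by rewrite -(sumL_map (nth v0 L)) -/(mkseq _ _) mkseq_nth. Qed.

Lemma finite_weight_balanced (B : finType) (V : Type) (Wv : V -> R)
    (We : V -> V -> letter B -> R) (L : seq V) (v0 : V) :
  (forall v w s, We v w s = We w v (linv s)) ->
  (forall v s, Wv v = sumR L (fun w => We v w s)) ->
  (forall v s, Wv v = sumR L (fun w => We w v s)) ->
  balanced (size L) (weight_vector Wv We (nth v0 L)).
Proof.
move=> Hsym Hrow Hcol; split=> [i t _|i t _|t i j _ _] /=.
- by rewrite (Hrow _ t) (sumR_nth v0).
- by rewrite (Hcol _ t) (sumR_nth v0).
- by rewrite Hsym linvK.
Qed.

Theorem lemma2p2 (B : finType) (V : Type) (E : V -> V -> letter B -> Prop)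
    (Wv : V -> R) (We : V -> V -> letter B -> R) :
  finite_weight E Wv We ->
  forall v1 : V, Rlt R0 (Wv v1) ->
  exists x : FG B -> V,
    graph_subshift E x /\ periodic x /\ x (FG1 B) = v1.
Proof.
move=> [HWv [HWe [HE [Hsym [L [_ [HL1 [_ [Hrow Hcol]]]]]]]]] v1 Hv1.
pose vtx i := nth v1 L i.
have [i1 Hi1 Hvtx1] : exists2 i1, i1 < size L & vtx i1 = v1.
  by apply: In_nth; apply: HL1; lra.
have Hy : forall l, Rle R0 (weight_vector Wv We vtx l) by case=> [i|[[i j] t]] /=.
have [n [N [HN Hn Hpos]]] :=
  nat_weight_same_support Hy (finite_weight_balanced v1 Hsym Hrow Hcol).
have Hw0 : slot (size L) n (i1, 0) by split => //=; apply/Hn => //=; rewrite Hvtx1.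
have Hmove := slot_move_spec HN.
have Dmove s w : slot (size L) n w -> slot (size L) n (slot_move (size L) N s w).
  by move=> /(Hmove s) [].
have move_linv s w : slot (size L) n w ->
    slot_move (size L) N (linv s) (slot_move (size L) N s w) = w.
  by move=> /(Hmove s) [].
exists (fun f => vtx (actF (slot_move (size L) N) (i1, 0) f).1); split; [|split] => //.
- apply: (orbit_subshift Dmove move_linv (lab := fun w => vtx w.1) Hw0) => s w Hw.
  have [[Hj _] HN_pos _] := Hmove s w Hw.
  have /= HWe_pos := (Hpos s _ _ Hw.1 Hj).1 HN_pos.
  by apply: NNPP => /HE; lra.
- exact: (orbit_periodic Dmove move_linv (fun w => vtx w.1) Hw0 (@slots_complete _ _)).
Qed.
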